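(* Let $(V,E)$ be a finite graph and $p\in(0,1)$. Assume that there exists a vertex $\bar x\in V$ which belongs to at least four edges, and that there exists a spin configuration $\bar\sigma\in\{-1,1\}^V$ with $\delta_{\bar\sigma}(e)=0$ for every $e\in E$. Let $(\eta_t,\sigma_t)_{t\ge0}$ be a continuous-time Markov jump process on $\{0,1\}^E\times\{-1,1\}^V$ with rates $q$ satisfying $q((\eta,\sigma),(\eta',\sigma'))\ge0$ for $(\eta,\sigma)\ne(\eta',\sigma')$, $\sum_{(\eta',\sigma')}q((\eta,\sigma),(\eta',\sigma'))=0$ for all $(\eta,\sigma)$, and the detailed balance equation $IP(\eta,\sigma)q((\eta,\sigma),(\eta',\sigma'))=IP(\eta',\sigma')q((\eta',\sigma'),(\eta,\sigma))$ for all pairs of states. If the spin marginal $(\sigma_t)_{t\ge0}$ is a Markov jump process with transition rates $c(\sigma,\sigma')$ satisfying $c(\sigma,\sigma')=0$ whenever $\sigma,\sigma'$ differ at two or more vertices, $c(\sigma,\sigma^x)>0$ for all $x\in V$, and $c(\sigma,\sigma)=-\sum_{y\in V}c(\sigma,\sigma^y)$, then the edge marginal $(\eta_t)_{t\ge0}$ is not a Markov jump process.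
   Context: $(V,E)$ is a finite graph with unoriented edges, $E$ a set of pairs of distinct vertices. Edge configurations $\eta\in\{0,1\}^E$, spin configurations $\sigma\in\{-1,1\}^V$. For $e=\langle x,y\rangle$, $\delta_\sigma(e)=\mathbf 1_{\sigma(x)=\sigma(y)}$. $IP(\eta,\sigma)=\frac1Z\prod_{e\in E}\big(p\mathbf 1_{\eta(e)=1}\delta_\sigma(e)+(1-p)\mathbf 1_{\eta(e)=0}\big)$ with $Z$ the normalizing constant. $\sigma^x$ is $\sigma$ with the spin at $x$ flipped. A marginal process is a Markov jump process if it is a time-homogeneous Markov process for every initial distribution, with transition rates not depending on the initial distribution. *)

From HB Require Import structures.
From mathcomp Require Import all_boot all_order all_algebra.
From mathcomp Require Import all_classical all_reals all_analysis.
Set Implicit Arguments. Unset Strict Implicit. Unset Printing Implicit Defensive.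
Import Order.TTheory GRing.Theory Num.Theory.
Local Open Scope ring_scope.

Section Defs.
Variable R : realType.

Section Chain.
Variable S : finType.

Definition is_rate_matrix (Q : S -> S -> R) : Prop :=
  (forall x y, x != y -> 0 <= Q x y) /\ (forall x, \sum_(y : S) Q x y = 0).

Fixpoint rpow (Q : S -> S -> R) (k : nat) : S -> S -> R :=
  match k with
  | 0 => fun x y => if x == y then 1 else 0
  | k'.+1 => fun x y => \sum_(z : S) rpow Q k' x z * Q z y
  end.

(* transition function P_t = exp(t Q), entrywise as the exponential series *)
Definition trans (Q : S -> S -> R) (t : R) (x y : S) : R :=
  limn (fun N : nat => \sum_(k < N) (t ^+ k / (k`!)%:R) * rpow Q k x y).

Definition is_distr (mu : S -> R) : Prop :=
  (forall x, 0 <= mu x) /\ \sum_(x : S) mu x = 1.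

(* probability, for the chain started at x at time 0, of visiting the
   states of l at the successive times given by the nonnegative increments *)
Fixpoint path_prob (Q : S -> S -> R) (x : S) (l : seq (R * S)) : R :=
  match l with
  | [::] => 1
  | (d, y) :: l' => trans Q d x y * path_prob Q y l'
  end.
End Chain.

(* probability, for the chain with rates Q started at x, that the image
   under f of the chain takes the values of l at the successive times *)
Fixpoint marg_path_prob (S T : finType) (f : S -> T) (Q : S -> S -> R)
    (x : S) (l : seq (R * T)) : R :=
  match l with
  | [::] => 1
  | (d, y) :: l' =>
      \sum_(x' : S | f x' == y) trans Q d x x' * marg_path_prob f Q x' l'
  end.

(* The marginal f(X_t) of the Markov jump process X with rates Q is a
   (time-homogeneous) Markov jump process with transition rates c, for every
   initial distribution mu: all finite-dimensional distributions of f(X)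
   (at times 0 = t_0 <= t_1 <= ... <= t_n, given by increments d_i >= 0)
   coincide with those of the Markov chain with rates c and initial law the
   image of mu. *)
Definition marginal_MJP_with_rates (S T : finType) (Q : S -> S -> R)
    (f : S -> T) (c : T -> T -> R) : Prop :=
  is_rate_matrix c /\
  forall (mu : S -> R), is_distr mu ->
  forall (y0 : T) (l : seq (R * T)), all (fun p => 0 <= p.1) l ->
    \sum_(x : S | f x == y0) mu x * marg_path_prob f Q x l
    = (\sum_(x : S | f x == y0) mu x) * path_prob c y0 l.

Definition marginal_is_MJP (S T : finType) (Q : S -> S -> R) (f : S -> T)
  : Prop := exists c : T -> T -> R, marginal_MJP_with_rates Q f c.

Definition simple_graph (V Ed : finType) (ends : Ed -> V * V) : Prop :=
  (forall e, (ends e).1 != (ends e).2) /\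
  (forall e e', (ends e = ends e' \/ ends e = ((ends e').2, (ends e').1)) ->
     e = e').

(* spins: true = +1, false = -1 *)
Definition spin (V : finType) := {ffun V -> bool}.
Definition edgeconf (Ed : finType) := {ffun Ed -> bool}.

Definition delta (V Ed : finType) (ends : Ed -> V * V) (s : spin V) (e : Ed)
  : bool := s (ends e).1 == s (ends e).2.

Definition flip (V : finType) (s : spin V) (x : V) : spin V :=
  [ffun y => if y == x then ~~ s y else s y].

Definition IP_weight (V Ed : finType) (ends : Ed -> V * V) (p : R)
    (st : edgeconf Ed * spin V) : R :=
  \prod_(e : Ed) (p * ((st.1 e && delta ends st.2 e) : bool)%:R
                  + (1 - p) * ((~~ st.1 e) : bool)%:R).

Definition IP (V Ed : finType) (ends : Ed -> V * V) (p : R)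
    (st : edgeconf Ed * spin V) : R :=
  IP_weight ends p st / \sum_(st' : edgeconf Ed * spin V) IP_weight ends p st'.

End Defs.

From HB Require Import structures.
From mathcomp Require Import all_boot all_order all_algebra.
From mathcomp Require Import all_classical all_reals all_analysis.
From mathcomp Require Import ring.
Import Order.TTheory GRing.Theory Num.Theory numFieldNormedType.Exports.
Local Open Scope ring_scope.

(* Lumping: expanding the transition function exp(tQ) to first order in t shows
   that if f(X) is a Markov jump process with rates c, then
   c(f x, y) = sum_{x' : f x' = y} Q(x, x') whenever y <> f x.  This applies to
   the spin marginal (rates c) and to the edge marginal (rates c').  Detailed
   balance with respect to IP, which charges exactly the configurations whose
   open edges join equal spins, forbids jumps from charged to null
   configurations and makes positivity of q symmetric among charged ones.

   Take three edges at xb (three suffice), with far endpoints y1, y2, y3; let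
   eta3 open exactly these edges and eta0 close all edges.  For the
   antiferromagnetic sb, the only charged configuration with spins sb is
   (eta0, sb), so c(sb^xb, sb) > 0 forces q((eta3, sb^xb), (eta0, sb)) > 0,
   hence q((eta0, sb), (eta3, sb^xb)) > 0 and c'(eta0, eta3) > 0.  But from
   (eta0, s) with s = +1 exactly at xb and y1, every s' with (eta3, s') charged
   is constant on {xb, y1, y2, y3}, so it differs from s at two vertices, where
   c vanishes; thus q((eta0, s), (eta3, s')) = 0 for all s', and
   c'(eta0, eta3) = 0. *)

Section MatrixExponential.
Context {R : realType} {S : finType}.
Implicit Types (Q : S -> S -> R) (t : R).

Definition rate_bound Q : R := 1 + \sum_(a : S) \sum_(b : S) `|Q a b|.

Lemma rate_bound_ge0 Q : 0 <= rate_bound Q.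
Proof. by rewrite addr_ge0 //; do 2!apply: sumr_ge0 => ? _. Qed.

Lemma sum_col_norm_le Q y : \sum_(z : S) `|Q z y| <= rate_bound Q.
Proof.
apply: (@le_trans _ _ (\sum_(a : S) \sum_(b : S) `|Q a b|)); last by rewrite lerDr.
apply: ler_sum => z _.
by rewrite (bigD1 y) //= lerDl; apply: sumr_ge0.
Qed.

Lemma rpow_norm_le Q k x y : `|rpow Q k x y| <= rate_bound Q ^+ k.
Proof.
elim: k y => [|k IHk] y /=; first by rewrite expr0; case: eqP; rewrite ?normr1 ?normr0.
apply: le_trans (ler_norm_sum _ _ _) _.
apply: (@le_trans _ _ (\sum_z rate_bound Q ^+ k * `|Q z y|)).
  by apply: ler_sum => z _; rewrite normrM ler_wpM2r.
rewrite -mulr_sumr exprS mulrC ler_wpM2r ?sum_col_norm_le //.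
exact/exprn_ge0/rate_bound_ge0.
Qed.

Definition exp_term Q t x y (k : nat) : R := t ^+ k / k`!%:R * rpow Q k x y.

Lemma transE Q t x y : trans Q t x y = limn (series (exp_term Q t x y)).
Proof.
rewrite /trans (_ : (fun N : nat => _) = series (exp_term Q t x y)) //.
by apply/funext => N; rewrite /series /= big_mkord.
Qed.

Lemma exp_term_norm_le Q t x y k : 0 <= t ->
  `|exp_term Q t x y k| <= t ^+ k * exp_coeff (rate_bound Q) k.
Proof.
move=> t0; rewrite /exp_term /exp_coeff normrM ger0_norm ?divr_ge0 ?exprn_ge0 //.
by rewrite mulrAC mulrA ler_wpM2r ?invr_ge0 // ler_wpM2l ?exprn_ge0 ?rpow_norm_le.
Qed.

Lemma is_cvg_series_exp_term Q t x y : 0 <= t <= 1 ->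
  cvgn (series (exp_term Q t x y)).
Proof.
move=> /andP[t0 t1]; apply: normed_cvg.
apply: (series_le_cvg _ _ _ (is_cvg_series_exp_coeff (rate_bound Q))) => k /=.
- exact: normr_ge0.
- exact/exp_coeff_ge0/rate_bound_ge0.
- apply: le_trans (exp_term_norm_le _ _ _ _ _ t0) _.
  by rewrite ler_piMl ?exprn_ile1 ?exp_coeff_ge0 ?rate_bound_ge0.
Qed.

Lemma series_exp_coeff_le_expR (M : R) n : 0 <= M -> series (exp_coeff M) n <= expR M.
Proof.
move=> M0; apply: nondecreasing_cvgn_le; last exact: is_cvg_series_exp_coeff.
by apply: nondecreasing_series => k _ _; apply: exp_coeff_ge0.
Qed.

Lemma series_exp_term_first_order Q t x y n : 0 <= t <= 1 ->
  `|series (exp_term Q t x y) n.+2 - ((x == y)%:R + t * Q x y)|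
    <= t ^+ 2 * expR (rate_bound Q).
Proof.
move=> /andP[t0 t1]; set M := rate_bound Q.
have term0 : exp_term Q t x y 0 = (x == y)%:R.
  by rewrite /exp_term expr0 fact0 divr1 mul1r /=; case: eqP.
have term1 : exp_term Q t x y 1 = t * Q x y.
  rewrite /exp_term expr1 divr1 /= (bigD1 x) //= eqxx mul1r big1 ?addr0 // => z zx.
  by rewrite eq_sym (negbTE zx) mul0r.
rewrite /series /= big_mkord 2!big_ord_recl /= term0 term1 addrA (addrC (_ + _ + _)) addKr.
apply: le_trans (ler_norm_sum _ _ _) _.
have M0 : 0 <= M := rate_bound_ge0 Q.
apply: (@le_trans _ _ (t ^+ 2 * \sum_(i < n) exp_coeff M i.+2)).
  rewrite mulr_sumr; apply: ler_sum => i _.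
  apply: le_trans (exp_term_norm_le _ _ _ _ _ t0) _.
  by rewrite /bump /= !add1n ler_wpM2r ?exp_coeff_ge0 // ler_wiXn2l.
rewrite ler_wpM2l ?exprn_ge0 //; apply: le_trans (series_exp_coeff_le_expR M n.+2 M0).
by rewrite /series /= big_mkord 2!big_ord_recl /= addrA lerDr addr_ge0 ?exp_coeff_ge0.
Qed.

Lemma limn_dist_le (u : R ^nat) l e :
  cvgn u -> (\forall n \near \oo%classic, `|u n - l| <= e) -> `|limn u - l| <= e.
Proof.
move=> cu ule; rewrite ler_distl; apply/andP; split.
  by apply: limr_ge => //; apply: filterS ule => n; rewrite ler_distl => /andP[].
by apply: limr_le => //; apply: filterS ule => n; rewrite ler_distl => /andP[].
Qed.

Lemma trans_first_order Q t x y : 0 <= t <= 1 ->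
  `|trans Q t x y - ((x == y)%:R + t * Q x y)| <= t ^+ 2 * expR (rate_bound Q).
Proof.
move=> t01; rewrite transE; apply: limn_dist_le; first exact: is_cvg_series_exp_term.
exists 2%N => // -[|[|n]] // _; exact: series_exp_term_first_order.
Qed.

End MatrixExponential.

Lemma eq0_of_norm_le_linear (R : realFieldType) (D K : R) :
  (forall t, 0 < t <= 1 -> `|D| <= t * K) -> D = 0.
Proof.
move=> DK; apply/normr0_eq0/le_anti; rewrite normr_ge0 andbT.
have K0 : 0 <= K by rewrite -[K]mul1r (le_trans (normr_ge0 D)) ?DK ?ltr01 ?lexx.
apply/ler_addgt0Pr => e e0; rewrite add0r; pose t := Num.min 1 (e / (K + 1)).
have t0 : 0 < t by rewrite lt_min ltr01 divr_gt0 // ltr_pwDr.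
have t1 : t <= 1 by rewrite ge_min lexx.
apply: le_trans (DK t _) _; first by rewrite t0 t1.
apply: (@le_trans _ _ (e / (K + 1) * K)); first by rewrite ler_wpM2r // ge_min lexx orbT.
by rewrite mulrAC ler_pdivrMr ?ltr_pwDr // ler_pM2l // lerDl.
Qed.

Section MarginalRates.
Context {R : realType} {S T : finType} {Q : S -> S -> R} {f : S -> T} {c : T -> T -> R}.
Hypothesis Qc : marginal_MJP_with_rates Q f c.

Lemma trans_marginal t x y : 0 <= t ->
  \sum_(x' | f x' == y) trans Q t x x' = trans c t (f x) y.
Proof.
move=> t0; pose mu z : R := (z == x)%:R.
have mu_distr : is_distr mu.
  split=> [z|]; first by rewrite ler0n.
  by rewrite (bigD1 x) //= /mu eqxx big1 ?addr0 // => z /negbTE ->.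
have point_mass F : \sum_(z | f z == f x) mu z * F z = F x.
  rewrite (bigD1 x) //= /mu eqxx mul1r big1 ?addr0 // => z /andP[_ /negbTE ->].
  by rewrite mul0r.
have mass : \sum_(z | f z == f x) mu z = 1.
  by rewrite (bigD1 x) //= /mu eqxx big1 ?addr0 // => z /andP[_ /negbTE ->].
have := Qc.2 mu mu_distr (f x) [:: (t, y)]; rewrite /= andbT => /(_ t0).
rewrite point_mass mass mul1r mulr1.
by under eq_bigr do rewrite mulr1.
Qed.

Lemma marginal_rate_sum x y : y != f x -> \sum_(x' | f x' == y) Q x x' = c (f x) y.
Proof.
move=> yfx; apply/eqP; rewrite -subr_eq0; apply/eqP.
pose CQ := expR (rate_bound Q); pose Cc := expR (rate_bound c).
apply: (@eq0_of_norm_le_linear _ _ (Cc + \sum_(x' | f x' == y) CQ)).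
move=> t /andP[t0 t1]; have t01 : 0 <= t <= 1 by rewrite ltW.
have no_diag : \sum_(x' | f x' == y) (x == x')%:R = 0 :> R.
  by apply: big1 => z /eqP fz; case: eqP => // xz; rewrite -fz xz eqxx in yfx.
have first_order_error : t * (\sum_(x' | f x' == y) Q x x' - c (f x) y) =
    (trans c t (f x) y - ((f x == y)%:R + t * c (f x) y))
    - \sum_(x' | f x' == y) (trans Q t x x' - ((x == x')%:R + t * Q x x')).
  rewrite sumrB big_split /= no_diag -mulr_sumr trans_marginal ?ltW //.
  by rewrite eq_sym (negbTE yfx) add0r; ring.
rewrite -(ler_pM2l t0) mulrA -expr2 -[X in X * _](gtr0_norm t0) -normrM.
rewrite first_order_error mulrDr mulr_sumr.
apply: le_trans (ler_normB _ _) _; apply: lerD; first exact: trans_first_order.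
apply: le_trans (ler_norm_sum _ _ _) _.
by apply: ler_sum => z _; apply: trans_first_order.
Qed.

Hypothesis Q_ge0 : forall x x', x != x' -> 0 <= Q x x'.

Lemma marginal_rate_ge x x' : f x' != f x -> Q x x' <= c (f x) (f x').
Proof.
move=> fx'x; rewrite -marginal_rate_sum // (bigD1 x') //= lerDl.
apply: sumr_ge0 => z /andP[/eqP fz _]; apply/Q_ge0/eqP => xz.
by rewrite -fz -xz eqxx in fx'x.
Qed.

Lemma marginal_rate_eq0 x x' : f x' != f x -> c (f x) (f x') = 0 -> Q x x' = 0.
Proof.
move=> fx'x c0; apply/le_anti; rewrite -[X in _ <= X]c0 marginal_rate_ge //=.
by apply/Q_ge0; apply: contraNneq fx'x => ->.
Qed.

End MarginalRates.

Section Reversibility.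
Context {R : numDomainType} {S : Type} {mu : S -> R} {q : S -> S -> R}.
Hypothesis mu_q_rev : forall s s', mu s * q s s' = mu s' * q s' s.

Lemma reversible_rate_eq0 {s s'} : 0 < mu s -> mu s' = 0 -> q s s' = 0.
Proof.
move=> mu_s mu_s'; have /eqP := mu_q_rev s s'.
by rewrite mu_s' mul0r mulf_eq0 gt_eqF //= => /eqP.
Qed.

Lemma reversible_rate_gt0 {s s'} : 0 < mu s -> 0 < mu s' -> 0 < q s' s -> 0 < q s s'.
Proof. by move=> mu_s mu_s' q_s's; rewrite -(pmulr_rgt0 _ mu_s) mu_q_rev mulr_gt0. Qed.

End Reversibility.

Definition compatible {V Ed : finType} (ends : Ed -> V * V) (st : edgeconf Ed * spin V) :=
  [forall e, st.1 e ==> delta ends st.2 e].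

Section FortuinKasteleynMeasure.
Context {R : realType} {V Ed : finType} {ends : Ed -> V * V} {p : R}.
Hypothesis p01 : 0 < p < 1.

Lemma IP_weight_ge0 st : 0 <= IP_weight ends p st.
Proof.
have /andP[p0 p1] := p01.
by apply: prodr_ge0 => e _; rewrite addr_ge0 ?mulr_ge0 ?ler0n ?subr_ge0 ?ltW.
Qed.

Lemma IP_weight_gt0 st : compatible ends st -> 0 < IP_weight ends p st.
Proof.
move=> /forallP st_compat; have /andP[p0 p1] := p01.
apply: prodr_gt0 => e _; move: (st_compat e).
by case: (st.1 e) => /= [->|_]; rewrite ?mulr1 ?mulr0 ?addr0 ?add0r ?subr_gt0.
Qed.

Lemma IP_weight_eq0 st : ~~ compatible ends st -> IP_weight ends p st = 0.
Proof.
move=> /forallPn[e]; rewrite negb_imply => /andP[open_e /negbTE disagree_e].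
by rewrite /IP_weight (bigD1 e) //= open_e disagree_e /= !mulr0 addr0 mul0r.
Qed.

Lemma IP_gt0 st : compatible ends st -> 0 < IP ends p st.
Proof.
move=> st_compat; rewrite /IP divr_gt0 ?IP_weight_gt0 //.
rewrite (bigD1 st) //= ltr_pwDl ?IP_weight_gt0 //.
by apply: sumr_ge0 => st' _; apply: IP_weight_ge0.
Qed.

Lemma IP_eq0 st : ~~ compatible ends st -> IP ends p st = 0.
Proof. by move=> st_incompat; rewrite /IP IP_weight_eq0 ?mul0r. Qed.

End FortuinKasteleynMeasure.

Lemma flipK {V : finType} (s : spin V) x : flip (flip s x) x = s.
Proof. by apply/ffunP => v; rewrite !ffunE; case: eqP => // ->; rewrite negbK. Qed.

Lemma flip_neq {V : finType} (s : spin V) x : flip s x != s.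
Proof. by apply/eqP => /ffunP/(_ x); rewrite ffunE eqxx; case: (s x). Qed.

Definition star {V Ed : finType} (ends : Ed -> V * V) (xb : V) : {set Ed} :=
  [set e | ((ends e).1 == xb) || ((ends e).2 == xb)].

Definition nbr {V Ed : finType} (ends : Ed -> V * V) (xb : V) (e : Ed) : V :=
  if (ends e).1 == xb then (ends e).2 else (ends e).1.

Section Star.
Context {V Ed : finType} {ends : Ed -> V * V} {xb : V}.

Lemma delta_star (s : spin V) e :
  e \in star ends xb -> delta ends s e = (s xb == s (nbr ends xb e)).
Proof.
rewrite inE /nbr /delta; case: (ends e) => a b /=.
by have [->|_ /eqP->] := eqVneq a xb; rewrite // eq_sym.
Qed.

Hypothesis ends_simple : simple_graph ends.

Lemma nbr_neq e : e \in star ends xb -> nbr ends xb e != xb.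
Proof.
rewrite inE /nbr; have := ends_simple.1 e; case: (ends e) => a b /= ab.
by have [axb _|_ /= /eqP <-] := eqVneq a xb; rewrite // -axb eq_sym.
Qed.

Lemma nbr_inj : {in star ends xb &, injective (nbr ends xb)}.
Proof.
move=> e e' he he' nbr_ee'; apply: ends_simple.2.
move: he he' nbr_ee'; rewrite !inE /nbr.
case: (ends e) => a b; case: (ends e') => a' b' /=.
have [ax|ax] := eqVneq a xb; have [ax'|ax'] := eqVneq a' xb => /=.
- by move=> _ _ ->; left; rewrite ax ax'.
- by move=> _ /eqP b'x ->; right; rewrite ax b'x.
- by move=> /eqP bx _ ->; right; rewrite ax' bx.
- by move=> /eqP bx /eqP b'x ->; left; rewrite bx b'x.
Qed.

End Star.

Definition closed_edges {Ed : finType} : edgeconf Ed := [ffun=> false].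

Definition open_star {Ed : finType} (e1 e2 e3 : Ed) : edgeconf Ed :=
  [ffun e => e \in [set e1; e2; e3]].

Definition split_spin {V Ed : finType} (ends : Ed -> V * V) (xb : V) (e1 : Ed) : spin V :=
  [ffun v => (v == xb) || (v == nbr ends xb e1)].

Section OpenStar.
Context {R : realType} {V Ed : finType} {ends : Ed -> V * V} {p : R}.
Context {xb : V} {e1 e2 e3 : Ed} {sb : spin V}.
Hypothesis ends_simple : simple_graph ends.
Hypothesis p01 : 0 < p < 1.
Hypothesis e_star : [/\ e1 \in star ends xb, e2 \in star ends xb & e3 \in star ends xb].
Hypothesis e_neq : [/\ e1 != e2, e2 != e3 & e3 != e1].
Hypothesis sb_antiferro : forall e, ~~ delta ends sb e.

Local Notation open_star := (open_star e1 e2 e3).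
Local Notation split_spin := (split_spin ends xb e1).

Lemma open_star_neq : open_star != closed_edges.
Proof. by apply/eqP => /ffunP/(_ e1); rewrite !ffunE !inE eqxx. Qed.

Lemma open_star_in_star e : open_star e -> e \in star ends xb.
Proof. by case: e_star; rewrite ffunE !inE => ? ? ? /orP[/orP[]|] /eqP->. Qed.

Lemma compatible_closed_edges s : compatible ends (closed_edges, s).
Proof. by apply/forallP => e; rewrite ffunE. Qed.

Lemma compatible_open_starP s : compatible ends (open_star, s) ->
  forall e, open_star e -> s (nbr ends xb e) = s xb.
Proof.
move=> /forallP s_compat e open_e; have := s_compat e.
by rewrite /= open_e (delta_star (xb := xb)) ?open_star_in_star // => /eqP.
Qed.

Lemma compatible_open_star_flip : compatible ends (open_star, flip sb xb).
Proof.
apply/forallP => e /=; apply/implyP => /open_star_in_star e_star'.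
have := sb_antiferro e; rewrite !(delta_star (xb := xb)) // !ffunE eqxx.
by rewrite (negbTE (nbr_neq ends_simple _ e_star')); case: (sb xb); case: (sb _).
Qed.

Lemma compatible_antiferro eta : compatible ends (eta, sb) -> eta = closed_edges.
Proof.
move=> /forallP eta_compat; apply/ffunP => e; rewrite ffunE.
apply/negbTE/negP => open_e; have := eta_compat e.
by rewrite /= open_e (negbTE (sb_antiferro e)).
Qed.

Lemma split_spin_far s : compatible ends (open_star, s) ->
  (2 <= #|[set y | split_spin y != s y]|)%N.
Proof.
move=> /compatible_open_starP s_compat; case: e_star e_neq => h1 h2 h3 [n12 n23 n31].
have open1 : open_star e1 by rewrite ffunE !inE eqxx.
have open2 : open_star e2 by rewrite ffunE !inE eqxx orbT.
have open3 : open_star e3 by rewrite ffunE !inE eqxx !orbT.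
have nbr_eq := inj_in_eq (nbr_inj ends_simple).
have split2 : split_spin (nbr ends xb e2) = false.
  by rewrite ffunE (negbTE (nbr_neq ends_simple _ h2)) nbr_eq // eq_sym (negbTE n12).
have split3 : split_spin (nbr ends xb e3) = false.
  by rewrite ffunE (negbTE (nbr_neq ends_simple _ h3)) nbr_eq // (negbTE n31).
apply/card_gt1P; case sx: (s xb).
- exists (nbr ends xb e2), (nbr ends xb e3).
  by rewrite !inE split2 split3 !s_compat // sx nbr_eq.
- exists xb, (nbr ends xb e1); rewrite !inE !ffunE !eqxx orbT s_compat // sx.
  by split=> //; rewrite eq_sym (nbr_neq ends_simple _ h1).
Qed.

Context {q : edgeconf Ed * spin V -> edgeconf Ed * spin V -> R} {c : spin V -> spin V -> R}.
Hypothesis q_ge0 : forall st st', st != st' -> 0 <= q st st'.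
Hypothesis q_rev : forall st st', IP ends p st * q st st' = IP ends p st' * q st' st.
Hypothesis spin_marginal : marginal_MJP_with_rates q (fun st => st.2) c.

Lemma q_open_star_gt0 : 0 < c (flip sb xb) sb ->
  0 < q (closed_edges, sb) (open_star, flip sb xb).
Proof.
have flip_compat := IP_gt0 p01 _ compatible_open_star_flip.
move=> c_pos; apply: (reversible_rate_gt0 q_rev _ flip_compat).
  exact: IP_gt0 p01 _ (compatible_closed_edges _).
rewrite -(marginal_rate_sum spin_marginal (open_star, flip sb xb) sb) in c_pos;
  last by rewrite eq_sym flip_neq.
move: c_pos; rewrite (bigD1 (closed_edges, sb)) //= big1 ?addr0 //.
move=> -[eta s] /= /andP[/eqP -> ne].
apply: (reversible_rate_eq0 q_rev flip_compat); apply: IP_eq0.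
by apply: contra ne => /compatible_antiferro ->.
Qed.

Lemma q_open_star_eq0 :
  (forall s s' : spin V, (2 <= #|[set y | s y != s' y]|)%N -> c s s' = 0) ->
  forall s, q (closed_edges, split_spin) (open_star, s) = 0.
Proof.
move=> c_far s; have [s_compat|s_incompat] := boolP (compatible ends (open_star, s)).
  have far := split_spin_far _ s_compat.
  apply: (marginal_rate_eq0 spin_marginal q_ge0); last exact: c_far.
  apply: contraTneq far => /= ->.
  by apply/negP => /card_gt1P[y [_ [+ _ _]]]; rewrite inE eqxx.
apply: (reversible_rate_eq0 q_rev); last exact: IP_eq0.
exact: IP_gt0 p01 _ (compatible_closed_edges _).
Qed.

End OpenStar.

Theorem theorem4 (R : realType) (V Ed : finType) (ends : Ed -> V * V) (p : R)
  (q : edgeconf Ed * spin V -> edgeconf Ed * spin V -> R)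
  (c : spin V -> spin V -> R) :
  simple_graph ends ->
  0 < p < 1 ->
  (exists xb : V, 4 <= #|[set e : Ed | ((ends e).1 == xb) || ((ends e).2 == xb)]|)%N ->
  (exists sb : spin V, forall e : Ed, ~~ delta ends sb e) ->
  (forall s s', s != s' -> 0 <= q s s') ->
  (forall s, \sum_(s' : edgeconf Ed * spin V) q s s' = 0) ->
  (forall s s', IP ends p s * q s s' = IP ends p s' * q s' s) ->
  marginal_MJP_with_rates q (fun st => st.2) c ->
  (forall s s' : spin V, (2 <= #|[set y : V | s y != s' y]|)%N -> c s s' = 0) ->
  (forall (s : spin V) (x : V), 0 < c s (flip s x)) ->
  (forall s : spin V, c s s = - \sum_(y : V) c s (flip s y)) ->
  ~ marginal_is_MJP q (fun st => st.1).
Proof.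
move=> ends_simple p01 [xb star_big] [sb sb_antiferro] q_ge0 _ q_rev spin_marginal
  c_far c_flip _ [c' edge_marginal].
have /card_gt2P[e1 [e2 [e3 [e_star e_neq]]]] : (2 < #|star ends xb|)%N.
  exact: leq_trans star_big.
have c_flip_back : 0 < c (flip sb xb) sb by rewrite -[X in c _ X](flipK sb xb).
have q_open_gt0 := q_open_star_gt0 ends_simple p01 e_star sb_antiferro q_rev
  spin_marginal c_flip_back.
have c'_open_gt0 : 0 < c' closed_edges (open_star e1 e2 e3).
  apply: lt_le_trans q_open_gt0 _.
  exact: (marginal_rate_ge edge_marginal q_ge0 (closed_edges, sb) (_, _) open_star_neq).
suff c'_open_eq0 : c' closed_edges (open_star e1 e2 e3) = 0.
  by rewrite c'_open_eq0 ltxx in c'_open_gt0.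
rewrite -(marginal_rate_sum edge_marginal (closed_edges, split_spin ends xb e1))
  ?open_star_neq // big1 // => -[eta s] /= /eqP ->.
exact: (q_open_star_eq0 ends_simple p01 e_star e_neq q_ge0 q_rev spin_marginal c_far).
Qed.
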